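(* Let $K=\{\sum_{i=1}^\infty a_i3^{-i}: a_i\in\{0,1\}\text{ for all } i\ge1\}$, and define $f,g\colon K\to\mathbb{R}$ by $f(x)=\sum_{i=1}^\infty a_{2i-1}3^{-i}$ and $g(x)=\sum_{i=1}^\infty a_{2i}3^{-i}$ for $x=\sum_{i=1}^\infty a_i3^{-i}\in K$. Then $f,g$ are continuous and \[ \overline{\dim}_B\operatorname{graph}(f+g)=\frac12+\frac{\log 2}{\log 3}>1,\qquad \overline{\dim}_B\operatorname{graph}(f)=\overline{\dim}_B\operatorname{graph}(g)=\frac{\log 8}{\log 9}<1. \]
   Context: $\operatorname{graph}(h)=\{(x,h(x)):x\in K\}\subset\mathbb{R}^2$ with the Euclidean metric. $\overline{\dim}_B$ denotes upper box dimension: for a non-empty bounded $X$, $\overline{\dim}_B X=\limsup_n \frac{\log N_n(X)}{n\log 2}$, where $N_n(X)$ is the maximal cardinality of a subset of $X$ whose points are pairwise at distance $>2^{-n}$. *)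

From Stdlib Require Import Reals Lra List ClassicalEpsilon.
Open Scope R_scope.

(* [cantor_digits a x] : x = sum_{i>=1} a_i 3^{-i}, digits a_i in {0,1}
   (encoded as booleans; a 0 is unused). *)
Definition digit (b : bool) : R := if b then 1 else 0.

Definition cantor_digits (a : nat -> bool) (x : R) : Prop :=
  infinite_sum (fun n => digit (a (S n)) / 3 ^ (S n)) x.

Definition K (x : R) : Prop := exists a : nat -> bool, cantor_digits a x.

(* Value of a convergent series (chosen by epsilon; unique when it exists). *)
Definition series_value (u : nat -> R) : R :=
  epsilon (inhabits 0) (fun l => infinite_sum u l).

(* A digit sequence of x (the unique one when x is in K). *)
Definition digits_of (x : R) : nat -> bool :=
  epsilon (inhabits (fun _ => false)) (fun a => cantor_digits a x).

Definition fK (x : R) : R :=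
  series_value (fun n => digit (digits_of x (2 * n + 1)%nat) / 3 ^ (S n)).
Definition gK (x : R) : R :=
  series_value (fun n => digit (digits_of x (2 * n + 2)%nat) / 3 ^ (S n)).

Definition continuous_on_K (h : R -> R) : Prop :=
  forall x, K x -> limit1_in h K (h x) x.

Definition graph (h : R -> R) (p : R * R) : Prop :=
  K (fst p) /\ snd p = h (fst p).

Definition dist2 (p q : R * R) : R :=
  sqrt ((fst p - fst q) ^ 2 + (snd p - snd q) ^ 2).

Definition separated (X : R * R -> Prop) (n : nat) (l : list (R * R)) : Prop :=
  NoDup l /\ (forall p, In p l -> X p) /\
  (forall p q, In p l -> In q l -> p <> q -> dist2 p q > / 2 ^ n).

Definition is_Nn (X : R * R -> Prop) (n m : nat) : Prop :=
  (exists l, separated X n l /\ length l = m) /\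
  (forall l, separated X n l -> (length l <= m)%nat).

Definition is_limsup (u : nat -> R) (L : R) : Prop :=
  forall eps, eps > 0 ->
    (exists N, forall n, (n >= N)%nat -> u n < L + eps) /\
    (forall N, exists n, (n >= N)%nat /\ u n > L - eps).

Definition upper_box_dim_eq (X : R * R -> Prop) (D : R) : Prop :=
  exists N : nat -> nat, (forall n, is_Nn X n (N n)) /\
    is_limsup (fun n => ln (INR (N n)) / (INR n * ln 2)) D.

From Stdlib Require Import Reals Lra Lia Wf_nat List ClassicalEpsilon
  FunctionalExtensionality Classical.
Import ListNotations.
Open Scope R_scope.

(* Writing x = sum a_i 3^-i, each of f, g and f + g has the form
   x |-> sum_j psi(a_(2j-1), a_(2j)) 3^-j for a function psi of a digit pair taking
   c values (c = 2 for f and g, c = 3 for f + g).  At scale 2^-n ~ 9^-k a point of the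
   graph is determined up to distance ~ 9^-k by a code of size (4c)^k: its first 2k
   digits (which fix x up to 9^-k) and the values of psi on the digit pairs k+1..2k
   (which, together with the pairs 1..k, fix the second coordinate up to 9^-k).
   Conversely the points whose digits realise each code, and whose later digits are
   all equal, are pairwise ~ 9^-k apart: a difference among the first 2k digits
   separates the first coordinates, otherwise the first differing value of psi
   separates the second ones.  Hence N_n is (4c)^k up to a factor (4c)^2, with
   k ~ n log 2 / log 9, and the upper box dimension is log (4c) / log 9. *)

Lemma least_nat (P : nat -> Prop) :
  (exists n, P n) -> exists n, P n /\ forall m, P m -> (n <= m)%nat.
Proof.
  intros HP.
  destruct (dec_inh_nat_subset_has_unique_least_element P (fun n => classic (P n)) HP)
    as [n [Hn _]].
  exists n; exact Hn.
Qed.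

Lemma Un_cv_const (l : R) : Un_cv (fun _ => l) l.
Proof. intros eps Heps; exists O; intros n _; unfold R_dist; rewrite Rminus_diag, Rabs_R0; lra. Qed.

Lemma Un_cv_le_eventually (u v : nat -> R) (l1 l2 : R) (N : nat) :
  Un_cv u l1 -> Un_cv v l2 -> (forall n, (N <= n)%nat -> u n <= v n) -> l1 <= l2.
Proof.
  intros Hu Hv Huv.
  apply (Rle_cv_lim (Un := fun n => u (n + N)%nat) (Vn := fun n => v (n + N)%nat));
    [intros n; apply Huv; lia | apply CV_shift'; assumption ..].
Qed.

Lemma pow3_pos (n : nat) : 0 < 3 ^ n.
Proof. apply pow_lt; lra. Qed.

Lemma inv_pow3_pos (n : nat) : 0 < / 3 ^ n.
Proof. apply Rinv_0_lt_compat, pow3_pos. Qed.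

Lemma inv_pow3_le (m n : nat) : (m <= n)%nat -> / 3 ^ n <= / 3 ^ m.
Proof. intros; apply Rinv_le_contravar; [apply pow3_pos | apply Rle_pow; [lra | assumption]]. Qed.

Lemma inv_pow3_small (eps : R) : 0 < eps -> exists m, / 3 ^ m < eps.
Proof.
  intros Heps. destruct (archimed_cor1 eps Heps) as [m [Hm Hm0]]. exists m.
  apply (Rle_lt_trans _ (/ INR m)); [|exact Hm].
  apply Rinv_le_contravar; [apply lt_0_INR; lia|].
  clear; induction m as [|m IH]; [simpl; lra|].
  rewrite S_INR; simpl. pose proof (Rle_pow 3 0 m ltac:(lra) (Nat.le_0_l m)); simpl in *; lra.
Qed.

(** * Ternary expansions *)

(* [tsum d m] is the partial sum d_1/3 + ... + d_m/3^m. *)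
Fixpoint tsum (d : nat -> nat) (m : nat) : R :=
  match m with
  | O => 0
  | S m' => tsum d m' + INR (d (S m')) / 3 ^ S m'
  end.

Lemma tsum_ext (d1 d2 : nat -> nat) (m : nat) :
  (forall i, (1 <= i <= m)%nat -> d1 i = d2 i) -> tsum d1 m = tsum d2 m.
Proof.
  induction m as [|m IH]; intros H; simpl; [reflexivity|].
  rewrite IH, (H (S m)); [reflexivity | lia | intros i Hi; apply H; lia].
Qed.

Lemma tsum_add (d1 d2 : nat -> nat) (m : nat) :
  tsum (fun i => d1 i + d2 i)%nat m = tsum d1 m + tsum d2 m.
Proof.
  induction m as [|m IH]; simpl; [ring|].
  rewrite IH, plus_INR. pose proof (pow3_pos m). field. lra.
Qed.

Definition tval (d : nat -> nat) : R := series_value (fun n => INR (d (S n)) / 3 ^ S n).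

Lemma series_value_eq (u : nat -> R) (l : R) : infinite_sum u l -> series_value u = l.
Proof.
  intros Hl. unfold series_value.
  apply (uniqueness_sum u); [|exact Hl].
  exact (epsilon_spec (inhabits 0) (fun l => infinite_sum u l) (ex_intro _ l Hl)).
Qed.

Lemma infinite_sum_tsum (d : nat -> nat) (l : R) :
  infinite_sum (fun n => INR (d (S n)) / 3 ^ S n) l <-> Un_cv (tsum d) l.
Proof.
  assert (E : forall N, sum_f_R0 (fun n => INR (d (S n)) / 3 ^ S n) N = tsum d (S N))
    by (induction N as [|N IH]; simpl in *; [ring | rewrite IH; reflexivity]).
  split; intros H eps Heps; destruct (H eps Heps) as [N HN].
  - exists (S N); intros [|n] Hn; [lia|]. rewrite <- E. apply HN; lia.
  - exists N; intros n Hn. rewrite E. apply HN; lia.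
Qed.

Lemma tval_ext (d1 d2 : nat -> nat) :
  (forall i, (1 <= i)%nat -> d1 i = d2 i) -> tval d1 = tval d2.
Proof.
  intros H. unfold tval. f_equal. apply functional_extensionality; intros n.
  rewrite H by lia; reflexivity.
Qed.

Section Bounded.
Variables (c : nat) (d : nat -> nat).
Hypothesis d_le : forall i, (d i <= c)%nat.

Lemma tsum_tail (m j : nat) :
  0 <= tsum d (m + j) - tsum d m <= INR c / 2 * (/ 3 ^ m - / 3 ^ (m + j)).
Proof.
  induction j as [|j IH]; [rewrite Nat.add_0_r; lra|].
  rewrite Nat.add_succ_r; cbn [tsum].
  pose proof (inv_pow3_pos (m + j)) as Ht.
  assert (Hd : 0 <= INR (d (S (m + j))) <= INR c) by (split; [apply pos_INR | apply le_INR, d_le]).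
  replace (INR (d (S (m + j))) / 3 ^ S (m + j)) with (INR (d (S (m + j))) * (/ 3 ^ (m + j) / 3))
    by (simpl; field; apply Rgt_not_eq, pow3_pos).
  replace (/ 3 ^ S (m + j)) with (/ 3 ^ (m + j) / 3) by (simpl; field; apply Rgt_not_eq, pow3_pos).
  set (t := / 3 ^ (m + j)) in *. nra.
Qed.

Lemma tsum_between (m n : nat) : (m <= n)%nat ->
  tsum d m <= tsum d n <= tsum d m + INR c / 2 / 3 ^ m.
Proof.
  intros Hmn. replace n with (m + (n - m))%nat by lia.
  pose proof (tsum_tail m (n - m)). pose proof (inv_pow3_pos (m + (n - m))).
  pose proof (pos_INR c). unfold Rdiv in *. nra.
Qed.

Lemma tsum_cv : exists l, Un_cv (tsum d) l.
Proof.
  destruct (growing_cv (tsum d)) as [l Hl]; [| |exists l; exact Hl].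
  - intros n; apply (tsum_between n (S n)); lia.
  - exists (INR c / 2). intros x [n ->]. pose proof (tsum_between 0 n (Nat.le_0_l n)).
    simpl in *; lra.
Qed.

Lemma tval_cv : Un_cv (tsum d) (tval d).
Proof.
  destruct tsum_cv as [l Hl].
  unfold tval. rewrite (series_value_eq _ l); [exact Hl | now apply infinite_sum_tsum].
Qed.

Lemma tval_bounds (m : nat) : tsum d m <= tval d <= tsum d m + INR c / 2 / 3 ^ m.
Proof.
  split.
  - apply (Un_cv_le_eventually _ _ _ _ m (Un_cv_const _) tval_cv).
    intros n Hn; apply (tsum_between m n Hn).
  - apply (Un_cv_le_eventually _ _ _ _ m tval_cv (Un_cv_const _)).
    intros n Hn; apply (tsum_between m n Hn).
Qed.

End Bounded.

Section TwoExpansions.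
Variables (c : nat) (d1 d2 : nat -> nat).
Hypotheses (d1_le : forall i, (d1 i <= c)%nat) (d2_le : forall i, (d2 i <= c)%nat).

Lemma tval_add : tval (fun i => d1 i + d2 i)%nat = tval d1 + tval d2.
Proof.
  apply (UL_sequence (tsum (fun i => d1 i + d2 i)%nat)).
  - apply (tval_cv (c + c)); intros i; specialize (d1_le i); specialize (d2_le i); lia.
  - apply (Un_cv_ext (fun m => tsum d1 m + tsum d2 m)); [intros; symmetry; apply tsum_add|].
    apply CV_plus; [exact (tval_cv c d1 d1_le) | exact (tval_cv c d2 d2_le)].
Qed.

Lemma tval_close (m : nat) : (forall i, (1 <= i <= m)%nat -> d1 i = d2 i) ->
  Rabs (tval d1 - tval d2) <= INR c / 2 / 3 ^ m.
Proof.
  intros H. pose proof (tval_bounds c d1 d1_le m). pose proof (tval_bounds c d2 d2_le m).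
  rewrite (tsum_ext d1 d2 m H) in *. unfold Rabs; destruct Rcase_abs; lra.
Qed.

Lemma tval_sub_tsum (L : nat) : (forall i, (L < i)%nat -> d1 i = d2 i) ->
  tval d1 - tval d2 = tsum d1 L - tsum d2 L.
Proof.
  intros H.
  assert (Hconst : forall n, (L <= n)%nat -> tsum d1 n - tsum d2 n = tsum d1 L - tsum d2 L).
  { intros n Hn. replace n with (L + (n - L))%nat by lia. induction (n - L)%nat as [|j IH].
    - rewrite Nat.add_0_r; reflexivity.
    - rewrite Nat.add_succ_r; cbn [tsum]. rewrite (H (S (L + j))) by lia. lra. }
  pose proof (CV_minus _ _ _ _ (tval_cv c d1 d1_le) (tval_cv c d2 d2_le)) as Hcv.
  apply Rle_antisym;
    [ apply (Un_cv_le_eventually _ _ _ _ L Hcv (Un_cv_const _))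
    | apply (Un_cv_le_eventually _ _ _ _ L (Un_cv_const _) Hcv) ];
    intros n Hn; cbv beta; rewrite (Hconst n Hn); lra.
Qed.

Lemma tsum_sep (j L : nat) :
  (forall i, (1 <= i <= j)%nat -> d1 i = d2 i) -> d1 (S j) <> d2 (S j) -> (S j <= L)%nat ->
  / 3 ^ S j - INR c / 2 * (/ 3 ^ S j - / 3 ^ L) <= Rabs (tsum d1 L - tsum d2 L).
Proof.
  intros Hag Hd HL.
  pose proof (tsum_tail c d1 d1_le (S j) (L - S j)) as T1.
  pose proof (tsum_tail c d2 d2_le (S j) (L - S j)) as T2.
  replace (S j + (L - S j))%nat with L in T1, T2 by lia.
  assert (Hstep : forall d, tsum d (S j) = tsum d j + INR (d (S j)) * / 3 ^ S j)
    by reflexivity.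
  pose proof (inv_pow3_pos (S j)).
  assert (Hdig : / 3 ^ S j <= Rabs ((INR (d1 (S j)) - INR (d2 (S j))) * / 3 ^ S j)).
  { rewrite Rabs_mult, (Rabs_right (/ 3 ^ S j)) by lra.
    destruct (Nat.lt_gt_cases (d1 (S j)) (d2 (S j))) as [[Hlt|Hlt] _]; [exact Hd| |];
      apply le_INR in Hlt; rewrite S_INR in Hlt; unfold Rabs; destruct Rcase_abs; nra. }
  replace (tsum d1 L - tsum d2 L) with ((INR (d1 (S j)) - INR (d2 (S j))) * / 3 ^ S j
    + ((tsum d1 L - tsum d1 (S j)) - (tsum d2 L - tsum d2 (S j))))
    by (rewrite !Hstep, (tsum_ext d1 d2 j Hag); ring).
  revert Hdig. generalize ((INR (d1 (S j)) - INR (d2 (S j))) * / 3 ^ S j) as x. intros x Hx.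
  unfold Rabs in *; destruct Rcase_abs, Rcase_abs; lra.
Qed.

End TwoExpansions.

Lemma first_diff (d1 d2 : nat -> nat) (M : nat) :
  (exists i, (1 <= i <= M)%nat /\ d1 i <> d2 i) ->
  exists j, (S j <= M)%nat /\ (forall i, (1 <= i <= j)%nat -> d1 i = d2 i) /\ d1 (S j) <> d2 (S j).
Proof.
  intros Hex.
  destruct (least_nat (fun i => (1 <= i <= M)%nat /\ d1 i <> d2 i) Hex)
    as [[|j] [[Hj Hd] Hmin]]; [lia|].
  exists j; repeat split; [lia| |exact Hd].
  intros i Hi. destruct (Nat.eq_dec (d1 i) (d2 i)) as [|Hne]; [assumption|].
  assert (HiM : (1 <= i <= M)%nat) by lia. specialize (Hmin i (conj HiM Hne)); lia.
Qed.

Lemma tval_sep_bits (d1 d2 : nat -> nat) (M : nat) :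
  (forall i, (d1 i <= 1)%nat) -> (forall i, (d2 i <= 1)%nat) ->
  (exists i, (1 <= i <= M)%nat /\ d1 i <> d2 i) ->
  / 3 ^ M / 2 <= Rabs (tval d1 - tval d2).
Proof.
  intros H1 H2 Hex. destruct (first_diff d1 d2 M Hex) as [j [HjM [Hag Hd]]].
  pose proof (inv_pow3_le (S j) M HjM).
  enough (/ 3 ^ S j / 2 <= Rabs (tval d1 - tval d2)) by lra.
  apply (Un_cv_le_eventually _ _ _ _ (S j) (Un_cv_const _)
           (cv_cvabs _ _ (CV_minus _ _ _ _ (tval_cv 1 d1 H1) (tval_cv 1 d2 H2)))).
  intros n Hn. pose proof (tsum_sep 1 d1 d2 H1 H2 j n Hag Hd Hn).
  pose proof (inv_pow3_pos n). simpl INR in *. cbv beta. lra.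
Qed.

(* Digits up to 2 let a tail compensate a digit (0.1000... = 0.0222... in base 3),
   hence the assumption that the tails agree. *)
Lemma tval_sep_tail (d1 d2 : nat -> nat) (j L : nat) :
  (forall i, (d1 i <= 2)%nat) -> (forall i, (d2 i <= 2)%nat) ->
  (forall i, (1 <= i <= j)%nat -> d1 i = d2 i) -> d1 (S j) <> d2 (S j) -> (S j <= L)%nat ->
  (forall i, (L < i)%nat -> d1 i = d2 i) ->
  / 3 ^ L <= Rabs (tval d1 - tval d2).
Proof.
  intros H1 H2 Hag Hd HL Htail.
  rewrite (tval_sub_tsum 2 d1 d2 H1 H2 L Htail).
  pose proof (tsum_sep 2 d1 d2 H1 H2 j L Hag Hd HL). simpl INR in *. lra.
Qed.

(** * The Cantor set *)

Definition bits (a : nat -> bool) (i : nat) : nat := Nat.b2n (a i).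

Definition cantor (a : nat -> bool) : R := tval (bits a).

Lemma bits_le (a : nat -> bool) (i : nat) : (bits a i <= 1)%nat.
Proof. unfold bits; destruct (a i); simpl; lia. Qed.

Lemma digit_b2n (b : bool) : digit b = INR (Nat.b2n b).
Proof. destruct b; reflexivity. Qed.

Lemma cantor_digits_cantor (a : nat -> bool) : cantor_digits a (cantor a).
Proof.
  unfold cantor_digits.
  replace (fun n => digit (a (S n)) / 3 ^ S n) with (fun n => INR (bits a (S n)) / 3 ^ S n)
    by (apply functional_extensionality; intros n; rewrite digit_b2n; reflexivity).
  apply infinite_sum_tsum, (tval_cv 1), bits_le.
Qed.

Lemma K_cantor (a : nat -> bool) : K (cantor a).
Proof. exists a; apply cantor_digits_cantor. Qed.

Lemma cantor_digits_of (x : R) : K x -> x = cantor (digits_of x).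
Proof.
  intros Kx. unfold digits_of.
  apply (uniqueness_sum (fun n => digit (epsilon (inhabits (fun _ => false))
                                   (fun a => cantor_digits a x) (S n)) / 3 ^ S n)).
  - exact (epsilon_spec (inhabits (fun _ => false)) (fun a => cantor_digits a x) Kx).
  - apply cantor_digits_cantor.
Qed.

Lemma cantor_sep (a b : nat -> bool) (M : nat) :
  (exists i, (1 <= i <= M)%nat /\ a i <> b i) -> / 3 ^ M / 2 <= Rabs (cantor a - cantor b).
Proof.
  intros [i [Hi Hab]]. apply tval_sep_bits; [apply bits_le .. |].
  exists i; split; [exact Hi|]. unfold bits; destruct (a i), (b i); simpl; congruence.
Qed.

Lemma cantor_close (a b : nat -> bool) (m : nat) :
  (forall i, (1 <= i <= m)%nat -> a i = b i) -> Rabs (cantor a - cantor b) <= / 3 ^ m / 2.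
Proof.
  intros H. replace (/ 3 ^ m / 2) with (INR 1 / 2 / 3 ^ m)
    by (simpl; field; apply Rgt_not_eq, pow3_pos).
  apply tval_close; [apply bits_le .. |].
  intros i Hi; unfold bits; rewrite H by exact Hi; reflexivity.
Qed.

Lemma digits_of_cantor (a : nat -> bool) (i : nat) : (1 <= i)%nat -> digits_of (cantor a) i = a i.
Proof.
  intros Hi. destruct (Bool.bool_dec (digits_of (cantor a) i) (a i)) as [|Hne]; [assumption|].
  exfalso. pose proof (cantor_sep _ _ i (ex_intro _ i (conj (conj Hi (le_n i)) Hne))) as Hs.
  rewrite <- (cantor_digits_of _ (K_cantor a)), Rminus_diag, Rabs_R0 in Hs.
  pose proof (inv_pow3_pos i); lra.
Qed.

(** * Functions of the digit pairs *)

Definition pair (a : nat -> bool) (j : nat) : bool * bool := (a (2 * j - 1)%nat, a (2 * j)%nat).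

Definition pair_fun (psi : bool * bool -> nat) (x : R) : R :=
  tval (fun j => psi (pair (digits_of x) j)).

Lemma pair_fun_cantor (psi : bool * bool -> nat) (a : nat -> bool) :
  pair_fun psi (cantor a) = tval (fun j => psi (pair a j)).
Proof.
  apply tval_ext; intros j Hj. unfold pair. rewrite !digits_of_cantor by lia. reflexivity.
Qed.

Lemma pair_fun_continuous (psi : bool * bool -> nat) (c : nat) :
  (forall p, (psi p <= c)%nat) -> continuous_on_K (pair_fun psi).
Proof.
  intros Hpsi x Kx eps Heps. pose proof (pos_INR c).
  destruct (inv_pow3_small (eps / (INR c + 1))) as [m Hm]; [apply Rdiv_lt_0_compat; lra|].
  exists (/ 3 ^ (2 * m) / 2). split; [pose proof (inv_pow3_pos (2 * m)); lra|].
  intros y [Ky Hyx].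
  change (Rabs (y - x) < / 3 ^ (2 * m) / 2) in Hyx.
  change (Rabs (pair_fun psi y - pair_fun psi x) < eps).
  rewrite (cantor_digits_of x Kx), (cantor_digits_of y Ky) in Hyx.
  assert (Hag : forall i, (1 <= i <= 2 * m)%nat -> digits_of y i = digits_of x i).
  { intros i Hi. destruct (Bool.bool_dec (digits_of y i) (digits_of x i)) as [|Hne]; [assumption|].
    pose proof (cantor_sep _ _ (2 * m) (ex_intro _ i (conj Hi Hne))); lra. }
  assert (Hpair : forall j, (1 <= j <= m)%nat ->
            psi (pair (digits_of y) j) = psi (pair (digits_of x) j)).
  { intros j Hj. unfold pair. rewrite !Hag by lia. reflexivity. }
  pose proof (tval_close c _ _ (fun _ => Hpsi _) (fun _ => Hpsi _) m Hpair) as Hclose.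
  unfold pair_fun. pose proof (inv_pow3_pos m).
  assert (Eeps : eps = eps / (INR c + 1) * (INR c + 1)) by (field; lra).
  unfold Rdiv at 1 in Hclose. nra.
Qed.

(** * Packing numbers *)

Fixpoint lists_below (bs : list nat) : list (list nat) :=
  match bs with
  | [] => [[]]
  | b :: bs' => flat_map (fun x => map (cons x) (lists_below bs')) (seq 0 b)
  end.

Lemma In_lists_below (bs r : list nat) : In r (lists_below bs) <-> Forall2 lt r bs.
Proof.
  revert r; induction bs as [|b bs IH]; intros r; simpl.
  - split; [intros [<-|[]]; constructor | intros H; inversion H; auto].
  - rewrite in_flat_map. split.
    + intros [x [Hx Hr]]. apply in_map_iff in Hr as [r' [<- Hr']]. apply in_seq in Hx.
      constructor; [lia | apply IH, Hr'].
    + intros H; inversion H; subst. exists x. split; [apply in_seq; lia|].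
      apply in_map, IH; assumption.
Qed.

Lemma length_lists_below (bs : list nat) : length (lists_below bs) = fold_right Nat.mul 1%nat bs.
Proof.
  induction bs as [|b bs IH]; simpl; [reflexivity|].
  rewrite (flat_map_constant_length (c := length (lists_below bs)));
    [rewrite length_seq, IH; reflexivity | intros; apply length_map].
Qed.

Lemma NoDup_lists_below (bs : list nat) : NoDup (lists_below bs).
Proof.
  induction bs as [|b bs IH]; simpl; [repeat constructor; simpl; tauto|].
  induction (seq_NoDup b 0) as [|x xs Hx Hxs IHxs]; simpl; [constructor|].
  apply NoDup_app; [| exact IHxs |].
  - apply NoDup_map_NoDup_ForallPairs; [|exact IH]. intros r1 r2 _ _ E; injection E; auto.
  - intros r Hr Hr'. apply in_map_iff in Hr as [r1 [<- _]].
    apply in_flat_map in Hr' as [y [Hy Hr']]. apply in_map_iff in Hr' as [r2 [E _]].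
    injection E; intros; subst; contradiction.
Qed.

Lemma Forall2_lt_nth (r bs : list nat) :
  Forall2 lt r bs -> forall t, (t < length bs)%nat -> (nth t r 0 < nth t bs 0)%nat.
Proof.
  induction 1 as [|x b r bs Hxb Hr IH]; simpl; [lia|].
  intros [|t] Ht; [exact Hxb | apply IH; lia].
Qed.

Lemma first_diff_nth (r1 r2 : list nat) : length r1 = length r2 -> r1 <> r2 ->
  exists t, (t < length r1)%nat /\ nth t r1 0%nat <> nth t r2 0%nat /\
    forall t', (t' < t)%nat -> nth t' r1 0%nat = nth t' r2 0%nat.
Proof.
  intros Hlen Hne.
  destruct (least_nat (fun t => (t < length r1)%nat /\ nth t r1 0%nat <> nth t r2 0%nat))
    as [t [[Ht Hd] Hmin]].
  - apply NNPP; intros Hno. apply Hne, (nth_ext _ _ 0%nat 0%nat Hlen).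
    intros t Ht. apply NNPP; intros Hd. apply Hno; exists t; auto.
  - exists t; repeat split; [exact Ht | exact Hd |].
    intros t' Ht'. apply NNPP; intros Hd'.
    assert (Ht'r : (t' < length r1)%nat) by lia. specialize (Hmin t' (conj Ht'r Hd')). lia.
Qed.

Lemma Forall2_map_map (R' : nat -> nat -> Prop) (f g : nat -> nat) (l : list nat) :
  (forall x, In x l -> R' (f x) (g x)) -> Forall2 R' (map f l) (map g l).
Proof. induction l as [|x l IH]; simpl; intros H; constructor; auto. Qed.

Lemma dist2_le_sum (p q : R * R) : dist2 p q <= Rabs (fst p - fst q) + Rabs (snd p - snd q).
Proof.
  unfold dist2. set (u := fst p - fst q). set (v := snd p - snd q).
  pose proof (Rabs_pos u). pose proof (Rabs_pos v).
  rewrite <- (sqrt_pow2 (Rabs u + Rabs v)) by lra.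
  apply sqrt_le_1_alt. rewrite <- (pow2_abs u), <- (pow2_abs v). nra.
Qed.

Lemma dist2_ge_fst (p q : R * R) : Rabs (fst p - fst q) <= dist2 p q.
Proof.
  unfold dist2. rewrite <- (sqrt_pow2 (Rabs _)) by apply Rabs_pos.
  apply sqrt_le_1_alt. rewrite pow2_abs. pose proof (pow2_ge_0 (snd p - snd q)). lra.
Qed.

Lemma dist2_ge_snd (p q : R * R) : Rabs (snd p - snd q) <= dist2 p q.
Proof.
  unfold dist2. rewrite <- (sqrt_pow2 (Rabs _)) by apply Rabs_pos.
  apply sqrt_le_1_alt. rewrite pow2_abs. pose proof (pow2_ge_0 (fst p - fst q)). lra.
Qed.

Lemma separated_length_le (X : R * R -> Prop) (n : nat) (code : R * R -> list nat) (bs : list nat) :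
  (forall p, X p -> In (code p) (lists_below bs)) ->
  (forall p q, X p -> X q -> code p = code q -> dist2 p q <= / 2 ^ n) ->
  forall l, separated X n l -> (length l <= fold_right Nat.mul 1%nat bs)%nat.
Proof.
  intros Hin Hcl l [Hnd [HX Hsep]].
  rewrite <- length_lists_below, <- (length_map code l).
  apply NoDup_incl_length.
  - apply NoDup_map_NoDup_ForallPairs; [|exact Hnd]. intros p q Hp Hq E.
    destruct (classic (p = q)) as [|Hne]; [assumption|].
    specialize (Hsep p q Hp Hq Hne). specialize (Hcl p q (HX p Hp) (HX q Hq) E). lra.
  - intros s Hs. apply in_map_iff in Hs as [p [<- Hp]]. apply Hin, HX, Hp.
Qed.

Lemma separated_of_points (X : R * R -> Prop) (n : nat) (pt : list nat -> R * R) (bs : list nat) :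
  (forall r, In r (lists_below bs) -> X (pt r)) ->
  (forall r1 r2, In r1 (lists_below bs) -> In r2 (lists_below bs) -> r1 <> r2 ->
     dist2 (pt r1) (pt r2) > / 2 ^ n) ->
  exists l, separated X n l /\ length l = fold_right Nat.mul 1%nat bs.
Proof.
  intros HX Hsep. exists (map pt (lists_below bs)).
  split; [|rewrite length_map; apply length_lists_below].
  assert (Hpos : 0 < / 2 ^ n) by (apply Rinv_0_lt_compat, pow_lt; lra).
  split; [|split].
  - apply NoDup_map_NoDup_ForallPairs; [|apply NoDup_lists_below].
    intros r1 r2 H1 H2 E. destruct (classic (r1 = r2)) as [|Hne]; [assumption|].
    specialize (Hsep r1 r2 H1 H2 Hne). rewrite E in Hsep.
    unfold dist2 in Hsep. rewrite !Rminus_diag, pow_i, Rplus_0_r, sqrt_0 in Hsep by lia. lra.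
  - intros p Hp. apply in_map_iff in Hp as [r [<- Hr]]. auto.
  - intros p q Hp Hq Hne. apply in_map_iff in Hp as [r1 [<- Hr1]].
    apply in_map_iff in Hq as [r2 [<- Hr2]]. apply Hsep; [assumption .. |].
    intros ->; apply Hne; reflexivity.
Qed.

Lemma Nn_exists (X : R * R -> Prop) (n U : nat) :
  (forall l, separated X n l -> (length l <= U)%nat) -> exists m, is_Nn X n m.
Proof.
  intros HU.
  set (P := fun m => exists l, separated X n l /\ length l = m).
  assert (Hmax : forall u, P 0%nat -> (forall m, P m -> (m <= u)%nat) ->
                   exists m, P m /\ forall m', P m' -> (m' <= m)%nat).
  { induction u as [|u IH]; intros H0 Hu; [exists 0%nat; split; auto|].
    destruct (classic (P (S u))) as [HS|HS]; [exists (S u); split; auto|].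
    apply IH; [assumption|]. intros m Hm. specialize (Hu m Hm).
    destruct (Nat.eq_dec m (S u)); [subst; contradiction | lia]. }
  destruct (Hmax U) as [m [Hm Hm']].
  - exists []. repeat split; [constructor | simpl; tauto ..].
  - intros m [l [Hl <-]]; auto.
  - exists m. split; [exact Hm|]. intros l Hl; apply Hm'; exists l; auto.
Qed.

(** * Upper box dimension from two-sided packing bounds *)

Lemma ln_le_mono (x y : R) : 0 < x -> x <= y -> ln x <= ln y.
Proof. intros Hx [Hxy | <-]; [left; apply ln_increasing | right]; auto. Qed.

Lemma ln_gt_0 (x : R) : 1 < x -> 0 < ln x.
Proof. intros Hx. rewrite <- ln_1. apply ln_increasing; lra. Qed.

Lemma is_limsup_of_rate (u : nat -> R) (D C : R) (n0 : nat) :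
  (forall n, (n0 <= n)%nat -> Rabs (u n - D) <= C / INR n) -> is_limsup u D.
Proof.
  intros Hu eps Heps.
  destruct (archimed_cor1 (eps / (Rabs C + 1))) as [N [HN HN0]];
    [apply Rdiv_lt_0_compat; [|pose proof (Rabs_pos C)]; lra|].
  assert (Hnear : forall n, (max N n0 <= n)%nat -> Rabs (u n - D) < eps).
  { intros n Hn. specialize (Hu n ltac:(lia)).
    assert (HNn : 0 < INR N <= INR n) by (split; [apply lt_0_INR | apply le_INR]; lia).
    assert (Hinv : / INR n <= / INR N) by (apply Rinv_le_contravar; lra).
    pose proof (Rle_abs C). pose proof (Rabs_pos C).
    assert (E : eps = eps / (Rabs C + 1) * (Rabs C + 1)) by (field; lra).
    assert (0 < / INR n) by (apply Rinv_0_lt_compat; lra).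
    unfold Rdiv in Hu. nra. }
  split.
  - exists (max N n0). intros n Hn. specialize (Hnear n Hn). apply Rabs_def2 in Hnear. lra.
  - intros M. exists (max M (max N n0)). split; [lia|].
    specialize (Hnear _ (Nat.le_max_r M _)). apply Rabs_def2 in Hnear. lra.
Qed.

(* [x] is [n], [t] the scale index [k] with [s^(k-1) < 2^(n+1) <= s^k], and [L]
   the logarithm of a count between [A^(k-2)] and [A^k]. *)
Lemma log_ratio_near (l2 ls la x t L : R) :
  0 < l2 -> 0 < ls -> 0 <= la -> 0 < x ->
  (x + 1) * l2 <= t * ls -> (t - 1) * ls < (x + 1) * l2 ->
  (t - 2) * la <= L <= t * la ->
  Rabs (L / (x * l2) - la / ls) <= (la / ls + 2 * la / l2) / x.
Proof.
  intros H2 Hs Ha Hx Ht1 Ht2 [HL1 HL2].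
  assert (Hd : 0 < / (x * l2 * ls))
    by (apply Rinv_0_lt_compat, Rmult_lt_0_compat; [apply Rmult_lt_0_compat|]; lra).
  replace (L / (x * l2) - la / ls) with ((L * ls - la * x * l2) * / (x * l2 * ls)) by (field; lra).
  replace ((la / ls + 2 * la / l2) / x) with ((la * l2 + 2 * la * ls) * / (x * l2 * ls))
    by (field; lra).
  apply Rabs_le. rewrite Ropp_mult_distr_l.
  assert (la * ((x + 1) * l2) <= la * (t * ls)) by (apply Rmult_le_compat_l; lra).
  assert (la * (t * ls) <= la * ((x + 1) * l2 + ls)) by (apply Rmult_le_compat_l; lra).
  assert ((t - 2) * la * ls <= L * ls /\ L * ls <= t * la * ls)
    by (split; apply Rmult_le_compat_r; lra).
  split; apply Rmult_le_compat_r; nra.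
Qed.

Lemma scale_index (s : R) (n : nat) : 4 <= s ->
  exists k, (1 <= k)%nat /\ 2 * 2 ^ n <= s ^ k /\ s ^ (k - 1) < 2 * 2 ^ n.
Proof.
  intros Hs.
  destruct (least_nat (fun k => 2 * 2 ^ n <= s ^ k)) as [k [Hk Hmin]].
  - exists (S n). simpl. assert (2 ^ n <= s ^ n) by (apply pow_incr; lra).
    assert (0 < 2 ^ n) by (apply pow_lt; lra). nra.
  - assert (H1 : (1 <= k)%nat).
    { destruct k; [|lia]. simpl in Hk. pose proof (pow_R1_Rle 2 n ltac:(lra)). lra. }
    exists k. repeat split; [exact H1 | exact Hk |].
    apply Rnot_le_lt. intros Hle. specialize (Hmin _ Hle). lia.
Qed.

Section ScaleBounds.
Variables (X : R * R -> Prop) (A : nat) (s : R).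
Hypotheses (A_ge_1 : (1 <= A)%nat) (s_ge_4 : 4 <= s).
Hypothesis packing_le :
  forall n k, 2 * 2 ^ n <= s ^ k -> forall l, separated X n l -> (length l <= A ^ k)%nat.
Hypothesis packing_ge :
  forall n k, 2 * s ^ k < 2 ^ n -> exists l, separated X n l /\ length l = (A ^ k)%nat.

Lemma Nn_between (n k m : nat) : (2 <= n)%nat -> (1 <= k)%nat ->
  2 * 2 ^ n <= s ^ k -> s ^ (k - 1) < 2 * 2 ^ n -> is_Nn X n m ->
  (A ^ (k - 2) <= m <= A ^ k)%nat.
Proof.
  intros Hn Hk1 Hk Hk' [[l [Hl <-]] Hmax]. split; [|exact (packing_le n k Hk l Hl)].
  destruct (packing_ge n (k - 2)%nat) as [l' [Hl' <-]]; [|exact (Hmax l' Hl')].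
  assert (H4 : 2 ^ 2 <= 2 ^ n) by (apply Rle_pow; [lra | lia]). simpl in H4.
  destruct (Nat.le_gt_cases 2 k) as [Hk2|Hk2].
  - replace (k - 1)%nat with (S (k - 2)) in Hk' by lia. simpl in Hk'.
    assert (0 < s ^ (k - 2)) by (apply pow_lt; lra). nra.
  - replace (k - 2)%nat with 0%nat by lia. simpl. lra.
Qed.

Lemma upper_box_dim_eq_of_scale : upper_box_dim_eq X (ln (INR A) / ln s).
Proof.
  assert (Hex : forall n, exists m, is_Nn X n m).
  { intros n. destruct (scale_index s n s_ge_4) as [k [_ [Hk _]]].
    exact (Nn_exists X n (A ^ k) (packing_le n k Hk)). }
  destruct (choice _ Hex) as [N HN]. exists N; split; [exact HN|].
  assert (HA : 0 < INR A) by (apply lt_0_INR; lia).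
  assert (Hla : 0 <= ln (INR A))
    by (rewrite <- ln_1; apply ln_le_mono; [lra | apply (le_INR 1); lia]).
  apply (is_limsup_of_rate _ _ (ln (INR A) / ln s + 2 * ln (INR A) / ln 2) 2).
  intros n Hn. destruct (scale_index s n s_ge_4) as [k [Hk1 [Hk Hk']]].
  destruct (Nn_between n k (N n) Hn Hk1 Hk Hk' (HN n)) as [Hlower Hupper].
  assert (HApos : forall j, 0 < INR (A ^ j))
    by (intros; apply lt_0_INR, Nat.neq_0_lt_0, Nat.pow_nonzero; lia).
  assert (HN1 : 0 < INR (N n)) by (apply (Rlt_le_trans _ _ _ (HApos (k - 2)%nat)), le_INR, Hlower).
  cbv beta. apply (log_ratio_near _ _ _ _ (INR k));
    [apply ln_gt_0; lra | apply ln_gt_0; lra | exact Hla | apply lt_0_INR; lia | | | split].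
  - rewrite <- S_INR, <- !ln_pow by lra. apply ln_le_mono; [apply pow_lt; lra | simpl; lra].
  - replace (INR k - 1) with (INR (k - 1)) by (rewrite minus_INR by lia; reflexivity).
    rewrite <- S_INR, <- !ln_pow by lra. apply ln_increasing; [apply pow_lt; lra | simpl; lra].
  - apply (Rle_trans _ (INR (k - 2) * ln (INR A))).
    + apply Rmult_le_compat_r; [exact Hla|].
      destruct (Nat.le_gt_cases 2 k) as [Hk2|Hk2]; [rewrite minus_INR by lia; simpl; lra|].
      replace (k - 2)%nat with 0%nat by lia. apply lt_INR in Hk2. simpl in *; lra.
    + rewrite <- ln_pow, <- pow_INR by exact HA.
      apply ln_le_mono; [apply HApos | apply le_INR, Hlower].
  - rewrite <- ln_pow, <- pow_INR by exact HA. apply ln_le_mono; [exact HN1 | apply le_INR, Hupper].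
Qed.

End ScaleBounds.

(** * Packing the graph of a pair function *)

Definition pair_code (p : bool * bool) : nat := (2 * Nat.b2n (fst p) + Nat.b2n (snd p))%nat.

Definition pair_decode (e : nat) : bool * bool := (2 <=? e, Nat.odd e)%nat.

Lemma pair_code_lt (p : bool * bool) : (pair_code p < 4)%nat.
Proof. destruct p as [[] []]; unfold pair_code; simpl; lia. Qed.

Lemma pair_code_inj (p q : bool * bool) : pair_code p = pair_code q -> p = q.
Proof. destruct p as [[] []], q as [[] []]; unfold pair_code; simpl; congruence. Qed.

Lemma pair_decode_inj (e1 e2 : nat) : (e1 < 4)%nat -> (e2 < 4)%nat ->
  pair_decode e1 = pair_decode e2 -> e1 = e2.
Proof.
  intros H1 H2 E.
  destruct e1 as [|[|[|[|]]]], e2 as [|[|[|[|]]]]; try lia; compute in E; congruence.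
Qed.

Lemma pair_eq_digits (a b : nat -> bool) (k : nat) :
  (forall j, (1 <= j <= k)%nat -> pair a j = pair b j) ->
  forall i, (1 <= i <= 2 * k)%nat -> a i = b i.
Proof.
  intros H i Hi. destruct (Nat.Even_or_Odd i) as [[m Hm] | [m Hm]].
  - replace i with (2 * m)%nat by lia. exact (f_equal snd (H m ltac:(lia))).
  - replace i with (2 * S m - 1)%nat by lia. exact (f_equal fst (H (S m) ltac:(lia))).
Qed.

Lemma pow3_double (k : nat) : 3 ^ (2 * k) = 9 ^ k.
Proof. rewrite pow_mult; f_equal; ring. Qed.

Section PairGraph.
Variables (psi : bool * bool -> nat) (c : nat) (phi : nat -> bool * bool).
Hypotheses (psi_lt : forall p, (psi p < c)%nat) (c_le : (c <= 3)%nat)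
  (psi_phi : forall e, (e < c)%nat -> psi (phi e) = e).

Lemma psi_le (p : bool * bool) : (psi p <= 2)%nat.
Proof. specialize (psi_lt p); lia. Qed.

Definition code_bound (k j : nat) : nat := if (j <=? k)%nat then 4%nat else c.

Definition code_digit (k : nat) (a : nat -> bool) (j : nat) : nat :=
  if (j <=? k)%nat then pair_code (pair a j) else psi (pair a j).

Definition code (k : nat) (a : nat -> bool) : list nat := map (code_digit k a) (seq 1 (2 * k)).

Definition code_bounds (k : nat) : list nat := map (code_bound k) (seq 1 (2 * k)).

Lemma code_in (k : nat) (a : nat -> bool) : In (code k a) (lists_below (code_bounds k)).
Proof.
  apply In_lists_below, Forall2_map_map. intros j _. unfold code_digit, code_bound.
  destruct (j <=? k)%nat; [apply pair_code_lt | apply psi_lt].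
Qed.

Lemma length_code_bounds (k : nat) : length (code_bounds k) = (2 * k)%nat.
Proof. unfold code_bounds; rewrite length_map, length_seq; reflexivity. Qed.

Lemma nth_code_bounds (k t : nat) :
  (t < 2 * k)%nat -> nth t (code_bounds k) 0%nat = code_bound k (S t).
Proof.
  intros Ht. unfold code_bounds.
  rewrite (nth_indep _ _ (code_bound k 0)) by (rewrite length_map, length_seq; lia).
  rewrite map_nth, seq_nth by lia. reflexivity.
Qed.

Lemma prod_code_bounds (k : nat) : fold_right Nat.mul 1%nat (code_bounds k) = ((4 * c) ^ k)%nat.
Proof.
  unfold code_bounds. replace (2 * k)%nat with (k + k)%nat by lia.
  rewrite seq_app, map_app, fold_right_app.
  rewrite (map_ext_in _ (fun _ => 4%nat) (seq 1 k)),
          (map_ext_in _ (fun _ => c) (seq (1 + k) k)), !map_const, !length_seq.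
  - assert (Hrep : forall v m z, fold_right Nat.mul z (repeat v m) = (v ^ m * z)%nat)
      by (induction m as [|m IH]; intros; simpl; [lia | rewrite IH; lia]).
    rewrite !Hrep, Nat.pow_mul_l. lia.
  - intros j Hj; apply in_seq in Hj. unfold code_bound. destruct (Nat.leb_spec j k); lia.
  - intros j Hj; apply in_seq in Hj. unfold code_bound. destruct (Nat.leb_spec j k); lia.
Qed.

Lemma code_close (k : nat) (a b : nat -> bool) : code k a = code k b ->
  Rabs (cantor a - cantor b)
  + Rabs (tval (fun j => psi (pair a j)) - tval (fun j => psi (pair b j))) <= 3 / 2 * / 9 ^ k.
Proof.
  intros E. pose proof (ext_in_map E) as Hdig.
  assert (Hpair : forall j, (1 <= j <= k)%nat -> pair a j = pair b j).
  { intros j Hj. specialize (Hdig j ltac:(apply in_seq; lia)). unfold code_digit in Hdig.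
    destruct (Nat.leb_spec j k); [apply pair_code_inj, Hdig | lia]. }
  assert (Hpsi : forall j, (1 <= j <= 2 * k)%nat -> psi (pair a j) = psi (pair b j)).
  { intros j Hj. specialize (Hdig j ltac:(apply in_seq; lia)). unfold code_digit in Hdig.
    destruct (Nat.leb_spec j k); [rewrite Hpair by lia; reflexivity | exact Hdig]. }
  pose proof (cantor_close a b (2 * k) (pair_eq_digits a b k Hpair)).
  pose proof (tval_close 2 _ _ (fun _ => psi_le _) (fun _ => psi_le _) (2 * k) Hpsi).
  rewrite pow3_double in *. simpl INR in *.
  replace (2 / 2 / 9 ^ k) with (/ 9 ^ k) in * by (field; apply pow_nonzero; lra). lra.
Qed.

Lemma pair_graph_packing_le (n k : nat) : 2 * 2 ^ n <= 9 ^ k ->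
  forall l, separated (graph (pair_fun psi)) n l -> (length l <= (4 * c) ^ k)%nat.
Proof.
  intros Hnk. rewrite <- prod_code_bounds.
  apply (separated_length_le _ n (fun p => code k (digits_of (fst p)))); [intros; apply code_in|].
  intros [x y] [x' y'] [Kx Hy] [Kx' Hy'] E. simpl in *; subst y y'.
  pose proof (code_close k _ _ E) as Hclose.
  rewrite <- (cantor_digits_of x Kx), <- (cantor_digits_of x' Kx') in Hclose.
  eapply Rle_trans; [apply dist2_le_sum|]. unfold pair_fun; simpl.
  assert (0 < 2 ^ n) by (apply pow_lt; lra).
  assert (0 < / 2 ^ n) by (apply Rinv_0_lt_compat; lra).
  assert (/ 9 ^ k <= / 2 ^ n / 2)
    by (unfold Rdiv; rewrite <- Rinv_mult; apply Rinv_le_contravar; lra).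
  lra.
Qed.

(* [decode k r] realises the code [r]; its digit pairs beyond [2k] are all [phi 0]
   because [nth] defaults to [0]. *)
Definition decoded_pair (k : nat) (r : list nat) (j : nat) : bool * bool :=
  if (j <=? k)%nat then pair_decode (nth (j - 1) r 0%nat) else phi (nth (j - 1) r 0%nat).

Definition decode (k : nat) (r : list nat) (i : nat) : bool :=
  let p := decoded_pair k r (Nat.div2 (S i)) in if Nat.odd i then fst p else snd p.

Definition code_point (k : nat) (r : list nat) : R * R :=
  (cantor (decode k r), pair_fun psi (cantor (decode k r))).

Lemma pair_decode_list (k : nat) (r : list nat) (j : nat) : (1 <= j)%nat ->
  pair (decode k r) j = decoded_pair k r j.
Proof.
  intros Hj. destruct j as [|j]; [lia|]. unfold pair, decode.
  replace (2 * S j - 1)%nat with (S (2 * j)) by lia.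
  replace (2 * S j)%nat with (S (S (2 * j))) by lia.
  replace (Nat.div2 (S (S (2 * j)))) with (S j)
    by (change (S j = S (Nat.div2 (2 * j))); rewrite Nat.div2_double; reflexivity).
  replace (Nat.div2 (S (S (S (2 * j))))) with (S j)
    by (change (S j = S (Nat.div2 (S (2 * j)))); rewrite Nat.div2_succ_double; reflexivity).
  replace (Nat.odd (S (2 * j))) with true by (rewrite <- Nat.add_1_r, Nat.odd_odd; reflexivity).
  replace (Nat.odd (S (S (2 * j)))) with false
    by (replace (S (S (2 * j))) with (2 * S j)%nat by lia; rewrite Nat.odd_even; reflexivity).
  destruct (decoded_pair k r (S j)); reflexivity.
Qed.

Lemma code_list_nth (k : nat) (r : list nat) : In r (lists_below (code_bounds k)) ->
  length r = (2 * k)%nat /\ forall t, (t < 2 * k)%nat -> (nth t r 0 < code_bound k (S t))%nat.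
Proof.
  intros Hr. apply In_lists_below in Hr. split.
  - rewrite (Forall2_length Hr); apply length_code_bounds.
  - intros t Ht. rewrite <- nth_code_bounds by exact Ht. apply Forall2_lt_nth; [exact Hr|].
    rewrite length_code_bounds; exact Ht.
Qed.

Lemma decode_sep_fst (k t : nat) (r1 r2 : list nat) :
  In r1 (lists_below (code_bounds k)) -> In r2 (lists_below (code_bounds k)) ->
  (t < k)%nat -> nth t r1 0%nat <> nth t r2 0%nat ->
  / 9 ^ k / 2 <= Rabs (cantor (decode k r1) - cantor (decode k r2)).
Proof.
  intros H1 H2 Ht Hd. rewrite <- pow3_double. apply cantor_sep.
  apply NNPP; intros Hno. apply Hd.
  assert (Hlt : forall r, In r (lists_below (code_bounds k)) -> (nth t r 0 < 4)%nat).
  { intros r Hr. destruct (code_list_nth k r Hr) as [_ Hn]. specialize (Hn t ltac:(lia)).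
    unfold code_bound in Hn. destruct (Nat.leb_spec (S t) k); lia. }
  apply pair_decode_inj; [apply Hlt; assumption .. |].
  assert (Hpair : pair (decode k r1) (S t) = pair (decode k r2) (S t)).
  { unfold pair. f_equal; apply NNPP; intros Hne; apply Hno.
    - exists (2 * S t - 1)%nat; split; [lia | exact Hne].
    - exists (2 * S t)%nat; split; [lia | exact Hne]. }
  rewrite !pair_decode_list in Hpair by lia. unfold decoded_pair in Hpair.
  destruct (Nat.leb_spec (S t) k); [|lia]. rewrite Nat.sub_succ, Nat.sub_0_r in Hpair. exact Hpair.
Qed.

Lemma decode_sep_snd (k t : nat) (r1 r2 : list nat) :
  In r1 (lists_below (code_bounds k)) -> In r2 (lists_below (code_bounds k)) ->
  (k <= t < 2 * k)%nat -> nth t r1 0%nat <> nth t r2 0%nat ->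
  (forall t', (t' < t)%nat -> nth t' r1 0%nat = nth t' r2 0%nat) ->
  / 9 ^ k <= Rabs (pair_fun psi (cantor (decode k r1)) - pair_fun psi (cantor (decode k r2))).
Proof.
  intros H1 H2 Ht Hd Hag. rewrite !pair_fun_cantor, <- pow3_double.
  destruct (code_list_nth k r1 H1) as [L1 N1], (code_list_nth k r2 H2) as [L2 N2].
  apply (tval_sep_tail _ _ t); [intros; apply psi_le .. | | | lia |].
  - intros j Hj. rewrite !pair_decode_list by lia. unfold decoded_pair.
    rewrite (Hag (j - 1)%nat) by lia. reflexivity.
  - specialize (N1 t ltac:(lia)). specialize (N2 t ltac:(lia)).
    rewrite !pair_decode_list by lia. unfold decoded_pair, code_bound in *.
    destruct (Nat.leb_spec (S t) k); [lia|].
    rewrite Nat.sub_succ, Nat.sub_0_r, !psi_phi by assumption.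
    exact Hd.
  - intros j Hj. rewrite !pair_decode_list by lia. unfold decoded_pair.
    rewrite !nth_overflow by lia. reflexivity.
Qed.

Lemma pair_graph_packing_ge (n k : nat) : 2 * 9 ^ k < 2 ^ n ->
  exists l, separated (graph (pair_fun psi)) n l /\ length l = ((4 * c) ^ k)%nat.
Proof.
  intros Hnk. rewrite <- prod_code_bounds.
  apply (separated_of_points _ n (code_point k)); [intros; split; [apply K_cantor | reflexivity]|].
  intros r1 r2 H1 H2 Hne.
  destruct (code_list_nth k r1 H1) as [L1 _], (code_list_nth k r2 H2) as [L2 _].
  destruct (first_diff_nth r1 r2 ltac:(lia) Hne) as [t [Ht [Hd Hag]]].
  assert (/ 2 ^ n < / 9 ^ k / 2).
  { assert (0 < 9 ^ k) by (apply pow_lt; lra).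
    unfold Rdiv; rewrite <- Rinv_mult. apply Rinv_lt_contravar; nra. }
  assert (0 < / 9 ^ k) by (apply Rinv_0_lt_compat, pow_lt; lra).
  destruct (Nat.lt_ge_cases t k).
  - pose proof (decode_sep_fst k t r1 r2 H1 H2 ltac:(lia) Hd).
    pose proof (dist2_ge_fst (code_point k r1) (code_point k r2)). simpl in *. lra.
  - pose proof (decode_sep_snd k t r1 r2 H1 H2 ltac:(lia) Hd Hag).
    pose proof (dist2_ge_snd (code_point k r1) (code_point k r2)). simpl in *. lra.
Qed.

Lemma pair_graph_dim : upper_box_dim_eq (graph (pair_fun psi)) (ln (INR (4 * c)) / ln 9).
Proof.
  apply upper_box_dim_eq_of_scale; [pose proof (psi_lt (false, false)); lia | lra | |].
  - exact pair_graph_packing_le.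
  - exact pair_graph_packing_ge.
Qed.

End PairGraph.

Definition fst_bit (p : bool * bool) : nat := Nat.b2n (fst p).
Definition snd_bit (p : bool * bool) : nat := Nat.b2n (snd p).
Definition bit_sum (p : bool * bool) : nat := (fst_bit p + snd_bit p)%nat.

Lemma fK_pair_fun : fK = pair_fun fst_bit.
Proof.
  apply functional_extensionality; intros x. unfold fK, pair_fun, tval. f_equal.
  apply functional_extensionality; intros n. rewrite digit_b2n.
  unfold fst_bit, pair; simpl fst. do 4 f_equal. lia.
Qed.

Lemma gK_pair_fun : gK = pair_fun snd_bit.
Proof.
  apply functional_extensionality; intros x. unfold gK, pair_fun, tval. f_equal.
  apply functional_extensionality; intros n. rewrite digit_b2n.
  unfold snd_bit, pair; simpl snd. do 4 f_equal. lia.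
Qed.

Lemma bit_le (p : bool * bool) : (fst_bit p <= 1)%nat /\ (snd_bit p <= 1)%nat.
Proof. destruct p as [[] []]; unfold fst_bit, snd_bit; simpl; lia. Qed.

Lemma fK_plus_gK : (fun x => fK x + gK x) = pair_fun bit_sum.
Proof.
  rewrite fK_pair_fun, gK_pair_fun. apply functional_extensionality; intros x.
  symmetry. apply (tval_add 1); intros; apply bit_le.
Qed.

Lemma ln_8_div_ln_9 : ln (INR (4 * 2)) / ln 9 = ln 8 / ln 9.
Proof. do 2 f_equal. simpl. lra. Qed.

Lemma ln_12_div_ln_9 : ln (INR (4 * 3)) / ln 9 = 1 / 2 + ln 2 / ln 3.
Proof.
  replace (INR (4 * 3)) with (2 ^ 2 * 3) by (simpl; lra). replace 9 with (3 ^ 2) by lra.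
  rewrite ln_mult, !ln_pow by lra. pose proof (ln_gt_0 3 ltac:(lra)). simpl. field. lra.
Qed.

Lemma dim_fst_bit : upper_box_dim_eq (graph (pair_fun fst_bit)) (ln 8 / ln 9).
Proof.
  rewrite <- ln_8_div_ln_9. apply (pair_graph_dim _ _ (fun e => (Nat.odd e, false))).
  - intros p; pose proof (bit_le p); lia.
  - lia.
  - intros [|[|]] He; [reflexivity | reflexivity | lia].
Qed.

Lemma dim_snd_bit : upper_box_dim_eq (graph (pair_fun snd_bit)) (ln 8 / ln 9).
Proof.
  rewrite <- ln_8_div_ln_9. apply (pair_graph_dim _ _ (fun e => (false, Nat.odd e))).
  - intros p; pose proof (bit_le p); lia.
  - lia.
  - intros [|[|]] He; [reflexivity | reflexivity | lia].
Qed.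

Lemma dim_bit_sum : upper_box_dim_eq (graph (pair_fun bit_sum)) (1 / 2 + ln 2 / ln 3).
Proof.
  rewrite <- ln_12_div_ln_9. apply (pair_graph_dim _ _ (fun e => (1 <=? e, 2 <=? e)%nat)).
  - intros p; pose proof (bit_le p); unfold bit_sum; lia.
  - lia.
  - intros [|[|[|]]] He; [reflexivity .. | lia].
Qed.

Lemma half_plus_ln_2_div_ln_3_gt_1 : 1 / 2 + ln 2 / ln 3 > 1.
Proof.
  pose proof (ln_gt_0 3 ltac:(lra)) as H3.
  assert (H4 : ln 3 < ln (2 ^ 2)) by (apply ln_increasing; lra).
  rewrite ln_pow in H4 by lra. simpl INR in H4.
  apply Rlt_0_minus. replace (1 / 2 + ln 2 / ln 3 - 1) with ((2 * ln 2 - ln 3) / (2 * ln 3))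
    by (field; lra).
  apply Rdiv_lt_0_compat; lra.
Qed.

Lemma ln_8_div_ln_9_lt_1 : ln 8 / ln 9 < 1.
Proof.
  pose proof (ln_gt_0 9 ltac:(lra)). assert (ln 8 < ln 9) by (apply ln_increasing; lra).
  apply (Rmult_lt_reg_r (ln 9)); [lra|]. unfold Rdiv; rewrite Rmult_assoc, Rinv_l; lra.
Qed.

Theorem mainTheorem3 :
  continuous_on_K fK /\ continuous_on_K gK /\
  upper_box_dim_eq (graph (fun x => fK x + gK x)) (1 / 2 + ln 2 / ln 3) /\
  1 / 2 + ln 2 / ln 3 > 1 /\
  upper_box_dim_eq (graph fK) (ln 8 / ln 9) /\
  upper_box_dim_eq (graph gK) (ln 8 / ln 9) /\
  ln 8 / ln 9 < 1.
Proof.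
  rewrite fK_plus_gK, fK_pair_fun, gK_pair_fun.
  repeat split;
    [ apply (pair_fun_continuous _ 1); intros; apply bit_le ..
    | exact dim_bit_sum | exact half_plus_ln_2_div_ln_3_gt_1
    | exact dim_fst_bit | exact dim_snd_bit | exact ln_8_div_ln_9_lt_1 ].
Qed.
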